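(* Let $\bm{\mu}$ be the true mean vector, let $\delta\in(0,1)$ and $T^*=\log(1/\delta)/d_{s_0}(\bm{\mu})$. Suppose that at round $t$ (after every leaf has been drawn at least once) $\hat{\bm{\mu}}(t)=\bm{\mu}$, and the next leaf is selected by the ratio-based rule $I(t+1)\in\arg\max_{\ell\in\mathcal{L}(\mathcal{T})}w^{s_0}_\ell(\hat{\bm{\mu}}(t))/N_\ell(t)$ (the non-forced-exploration case of RD-Tracking-TMCTS). Then the selected leaf $\ell$ does not satisfy $N_\ell(t)>T^*w^{s_0}_\ell(\bm{\mu})$, unless $N_{\ell'}(t)>T^*w^{s_0}_{\ell'}(\bm{\mu})$ holds for all leaves $\ell'\in\mathcal{L}(\mathcal{T})$.
   Context: $\mathcal{T}$ is a finite rooted tree with node set $S$, root $s_0$, children $\mathcal{C}(s)$, leaves $\mathcal{L}(\mathcal{T})$, $\mathcal{D}(s)$ leaves descending from $s$; internal labels $L(s)\in\{\text{MAX},\text{MIN}\}$. $X\subseteq\mathbb{R}$ mean-parameter set of a one-parameter exponential family; $d(x,y)$ KL divergence; threshold $\theta\in X$. $V_s$ is the leaf mean at leaves and max/min of children's values at MAX/MIN nodes; $a_s=$'win' iff $V_s\ge\theta$. Recursive weights at a mean vector $\bm{\mu}$: $a^*=a_{s_0}(\bm{\mu})$; $P=$MAX, $Q=$MIN if $a^*=$'win', swapped if 'lose'. Leaf $s$: $w^s_s=1$, $d_s=d(\mu_s,\theta)$ if ($a^*=$'win', $\mu_s\ge\theta$) or ($a^*=$'lose', $\mu_s<\theta$),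 else $0$. $L(s)=P$: $d_s=\max_c d_c$, fixed $c^*(s)\in\arg\max_c d_c$, if $d_s>0$: $w^s=w^{c^*(s)}$ on $\mathcal{D}(c^*(s))$, $0$ elsewhere. $L(s)=Q$, all $d_c>0$: $d_s=(\sum_c1/d_c)^{-1}$, $w^s_\ell=\frac{w^c_\ell/d_c}{\sum_{c'}1/d_{c'}}$ on $\mathcal{D}(c)$. $L(s)=Q$ otherwise: $d_s=0$. Internal $s$ with $d_s=0$: $\bm{w}^s$ fixed arbitrary probability vector (the same fixed choices are used by the algorithm). $N_\ell(t)$ is the number of draws of leaf $\ell$ up to round $t$ and $\hat\mu_\ell(t)$ its empirical mean. *)

From Stdlib Require Import Reals List Lra Bool.
Open Scope bool_scope.
Import ListNotations.
Open Scope R_scope.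

(* A finite rooted game tree.  Leaves carry a leaf identifier (nat);
   internal nodes carry their label: [true] = MAX, [false] = MIN. *)
Inductive tree : Type :=
| Leaf (l : nat)
| Node (is_max : bool) (children : list tree).

Fixpoint leaves (t : tree) : list nat :=
  match t with
  | Leaf l => [l]
  | Node _ cs => flat_map leaves cs
  end.

Fixpoint nodes (t : tree) : list tree :=
  match t with
  | Leaf l => [t]
  | Node _ cs => t :: flat_map nodes cs
  end.

Definition wf_tree (t : tree) : Prop :=
  NoDup (leaves t) /\
  (forall b cs, In (Node b cs) (nodes t) -> cs <> []).

Definition maxl (xs : list R) : R :=
  match xs with [] => 0 | x :: xs' => fold_left Rmax xs' x end.
Definition minl (xs : list R) : R :=
  match xs with [] => 0 | x :: xs' => fold_left Rmin xs' x end.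
Definition suml (xs : list R) : R := fold_right Rplus 0 xs.

Fixpoint value (mu : nat -> R) (t : tree) : R :=
  match t with
  | Leaf l => mu l
  | Node b cs => (if b then maxl else minl) (map (value mu) cs)
  end.

Definition wins (mu : nat -> R) (theta : R) (t : tree) : bool :=
  if Rle_dec theta (value mu t) then true else false.

Definition memb (l : nat) (xs : list nat) : bool := existsb (Nat.eqb l) xs.

(* A selection rule [sel] for the fixed maximiser c*(s): given the list of
   children's d-values it returns an index of a maximal entry. *)
Definition argmax_rule (sel : list R -> nat) : Prop :=
  forall xs : list R, xs <> [] ->
    (sel xs < length xs)%nat /\
    forall i, (i < length xs)%nat -> nth i xs 0 <= nth (sel xs) xs 0.

(* [dflt s] : the fixed arbitrary probability vector used at internal nodes
   with d_s = 0 : a probability vector on D(s). *)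
Definition dflt_ok (dflt : tree -> nat -> R) (t : tree) : Prop :=
  forall s, In s (nodes t) ->
    (forall k, 0 <= dflt s k) /\
    (forall k, ~ In k (leaves s) -> dflt s k = 0) /\
    suml (map (dflt s) (leaves s)) = 1.

(* Recursive (d_s, w^s) at mean vector mu, given a* ([aw] = true iff 'win'),
   KL divergence [kl], threshold [theta], maximiser rule [sel] and the
   default vectors [dflt]. P = MAX iff a* = win. *)
Fixpoint dw (kl : R -> R -> R) (theta : R) (sel : list R -> nat)
  (dflt : tree -> nat -> R) (aw : bool) (mu : nat -> R) (t : tree)
  : R * (nat -> R) :=
  match t with
  | Leaf l =>
      ((if (aw && (if Rle_dec theta (mu l) then true else false))
           || (negb aw && (if Rlt_dec (mu l) theta then true else false))
        then kl (mu l) theta else 0),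
       fun k => if Nat.eqb k l then 1 else 0)
  | Node b cs =>
      let rs := (fix go (cs : list tree) : list (R * (nat -> R) * tree) :=
                   match cs with
                   | [] => []
                   | c :: cs' => (dw kl theta sel dflt aw mu c, c) :: go cs'
                   end) cs in
      let ds := map (fun r => fst (fst r)) rs in
      if Bool.eqb b aw then
        (* P node *)
        let d := maxl ds in
        if Rlt_dec 0 d then
          let r := nth (sel ds) rs ((0, fun _ => 0), Leaf 0) in
          (d, fun k => if memb k (leaves (snd r)) then snd (fst r) k else 0)
        else (0, dflt t)
      else
        (* Q node *)
        if forallb (fun x => if Rlt_dec 0 x then true else false) ds then
          let S := suml (map (fun x => / x) ds) in
          (/ S,
           fun k => suml (map (fun r =>
                      if memb k (leaves (snd r))
                      then snd (fst r) k / fst (fst r) else 0) rs) / S)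
        else (0, dflt t)
  end.

Definition d_root kl theta sel dflt (mu : nat -> R) (t : tree) : R :=
  fst (dw kl theta sel dflt (wins mu theta t) mu t).
Definition w_root kl theta sel dflt (mu : nat -> R) (t : tree) : nat -> R :=
  snd (dw kl theta sel dflt (wins mu theta t) mu t).

(* Since the empirical means agree with the true means on every leaf, the
   sampling weights computed at muhat are exactly w^{s0}(mu).  The constant
   T* is nonnegative, because d_{s0}(mu) >= 0 and delta < 1.  If some leaf k
   had N_k <= T* w_k, then T* > 0 and w_k / N_k >= 1 / T* > w_l / N_l, so k
   would beat the selected leaf l for the ratio rule. *)

From Stdlib Require Import Reals List.
From Stdlib Require Import Lra Lia.
Import ListNotations.
Open Scope R_scope.

Fixpoint tree_nested_ind (P : tree -> Prop) (HL : forall l, P (Leaf l))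
  (HN : forall b cs, Forall P cs -> P (Node b cs)) (t : tree) : P t :=
  match t with
  | Leaf l => HL l
  | Node b cs => HN b cs ((fix go (cs : list tree) : Forall P cs :=
       match cs with
       | [] => Forall_nil _
       | c :: cs' => Forall_cons c (tree_nested_ind P HL HN c) (go cs')
       end) cs)
  end.

Lemma leaves_Node_child b cs c k :
  In c cs -> In k (leaves c) -> In k (leaves (Node b cs)).
Proof. intros Hc Hk; simpl; apply in_flat_map; eauto. Qed.

Lemma value_ext mu muhat t :
  (forall k, In k (leaves t) -> mu k = muhat k) -> value mu t = value muhat t.
Proof.
  induction t as [l | b cs IH] using tree_nested_ind; intros H; simpl.
  - apply H; simpl; auto.
  - f_equal; apply map_ext_in; intros c Hc.
    apply (proj1 (Forall_forall _ _) IH c Hc).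
    intros k Hk; apply H, (leaves_Node_child b cs c); auto.
Qed.

(* Rewrites the anonymous fixpoint with which [dw] collects its children's results. *)
Lemma children_results_map (f : tree -> R * (nat -> R)) (cs : list tree) :
  (fix go (cs : list tree) : list (R * (nat -> R) * tree) :=
     match cs with
     | [] => []
     | c :: cs' => (f c, c) :: go cs'
     end) cs = map (fun c => (f c, c)) cs.
Proof. induction cs as [|c cs IH]; simpl; congruence. Qed.

Lemma dw_ext kl theta sel dflt aw mu muhat t :
  (forall k, In k (leaves t) -> mu k = muhat k) ->
  dw kl theta sel dflt aw mu t = dw kl theta sel dflt aw muhat t.
Proof.
  induction t as [l | b cs IH] using tree_nested_ind; intros H.
  - simpl; rewrite (H l) by (simpl; auto); reflexivity.
  - cbn [dw]; rewrite !children_results_map.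
    replace (map (fun c => (dw kl theta sel dflt aw mu c, c)) cs)
      with (map (fun c => (dw kl theta sel dflt aw muhat c, c)) cs);
      [reflexivity |].
    apply map_ext_in; intros c Hc; f_equal; symmetry.
    apply (proj1 (Forall_forall _ _) IH c Hc).
    intros k Hk; apply H, (leaves_Node_child b cs c); auto.
Qed.

Lemma w_root_ext kl theta sel dflt mu muhat t :
  (forall k, In k (leaves t) -> mu k = muhat k) ->
  w_root kl theta sel dflt mu t = w_root kl theta sel dflt muhat t.
Proof.
  intros H; unfold w_root, wins.
  rewrite (value_ext mu muhat t H), (dw_ext kl theta sel dflt _ mu muhat t H).
  reflexivity.
Qed.

Lemma Rinv_nonneg x : 0 <= x -> 0 <= / x.
Proof.
  intros [Hx | <-].
  - left; apply Rinv_0_lt_compat, Hx.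
  - rewrite Rinv_0; lra.
Qed.

Lemma suml_nonneg xs : (forall x, In x xs -> 0 <= x) -> 0 <= suml xs.
Proof.
  induction xs as [|x xs IH]; simpl; intros H; [lra |].
  pose proof (H x (or_introl eq_refl)).
  pose proof (IH (fun y Hy => H y (or_intror Hy))); lra.
Qed.

Lemma dw_fst_nonneg kl theta sel dflt aw mu t :
  (forall l, In l (leaves t) -> 0 <= kl (mu l) theta) ->
  0 <= fst (dw kl theta sel dflt aw mu t).
Proof.
  intros Hkl; destruct t as [l | b cs]; cbn [dw].
  - destruct (_ || _); simpl; [apply Hkl; simpl; auto | lra].
  - destruct (Bool.eqb b aw).
    + match goal with |- context [Rlt_dec 0 ?d] => destruct (Rlt_dec 0 d) end;
        simpl; lra.
    + match goal with |- context [if forallb ?p ?ds then _ else _] =>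
        destruct (forallb p ds) eqn:Hpos end; simpl; [| lra].
      apply Rinv_nonneg, suml_nonneg; intros y Hy.
      apply in_map_iff in Hy as [x [<- Hx]].
      apply forallb_forall with (x := x) in Hpos; [| exact Hx].
      destruct (Rlt_dec 0 x); [| discriminate].
      apply Rinv_nonneg; lra.
Qed.

Lemma ln_inv_nonneg delta : 0 < delta <= 1 -> 0 <= ln (1 / delta).
Proof.
  intros Hd; unfold Rdiv; rewrite Rmult_1_l, ln_Rinv by lra.
  destruct (Rle_lt_or_eq _ _ (proj2 Hd)) as [Hlt | ->].
  - pose proof (ln_increasing delta 1 (proj1 Hd) Hlt); rewrite ln_1 in *; lra.
  - rewrite ln_1; lra.
Qed.

Lemma gt_scaled_of_ratio_le T wk wl nk nl :
  0 <= T -> 0 < nk -> 0 < nl ->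
  wk / nk <= wl / nl -> nl > T * wl -> nk > T * wk.
Proof.
  intros HT Hnk Hnl Hratio Hl.
  assert (Hcross : wk * nl <= wl * nk).
  { apply (Rmult_le_compat_r (nk * nl)) in Hratio; [| nra].
    replace (wk / nk * (nk * nl)) with (wk * nl) in Hratio by (field; lra).
    replace (wl / nl * (nk * nl)) with (wl * nk) in Hratio by (field; lra).
    exact Hratio. }
  destruct (Rlt_le_dec (T * wk) nk) as [| Hk]; [lra | exfalso].
  assert (T * wk * nl <= T * wl * nk) by nra.
  nra.
Qed.

Theorem lemma1
  (X : R -> Prop) (kl : R -> R -> R) (theta : R)
  (sel : list R -> nat) (dflt : tree -> nat -> R) (t0 : tree)
  (mu muhat : nat -> R) (delta : R) (N : nat -> nat) (l : nat) :
  wf_tree t0 ->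
  (forall x y, X x -> X y -> 0 <= kl x y) ->
  (forall x, X x -> kl x x = 0) ->
  X theta ->
  (forall k, In k (leaves t0) -> X (mu k)) ->
  argmax_rule sel ->
  dflt_ok dflt t0 ->
  0 < delta < 1 ->
  (* every leaf drawn at least once *)
  (forall k, In k (leaves t0) -> (1 <= N k)%nat) ->
  (* the empirical means equal the true means *)
  (forall k, In k (leaves t0) -> muhat k = mu k) ->
  (* I(t+1) = l in argmax_l w^{s0}_l(muhat(t)) / N_l(t) *)
  In l (leaves t0) ->
  (forall k, In k (leaves t0) ->
     w_root kl theta sel dflt muhat t0 k / INR (N k)
     <= w_root kl theta sel dflt muhat t0 l / INR (N l)) ->
  let Tstar := ln (1 / delta) / d_root kl theta sel dflt mu t0 in
  INR (N l) > Tstar * w_root kl theta sel dflt mu t0 l ->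
  forall k, In k (leaves t0) ->
    INR (N k) > Tstar * w_root kl theta sel dflt mu t0 k.
Proof.
  intros _ Hkl _ HXtheta HXmu _ _ Hdelta HN Hmu Hl Hsel Tstar Hgt k Hk.
  rewrite (w_root_ext kl theta sel dflt muhat mu t0 Hmu) in Hsel.
  assert (Hd : 0 <= d_root kl theta sel dflt mu t0).
  { apply dw_fst_nonneg; intros j Hj; apply Hkl; auto. }
  assert (HT : 0 <= Tstar).
  { apply Rmult_le_pos; [apply ln_inv_nonneg; lra | apply Rinv_nonneg, Hd]. }
  assert (HNpos : forall j, In j (leaves t0) -> 0 < INR (N j)).
  { intros j Hj; apply lt_0_INR; specialize (HN j Hj); lia. }
  exact (gt_scaled_of_ratio_le _ _ _ _ _ HT (HNpos k Hk) (HNpos l Hl)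
           (Hsel k Hk) Hgt).
Qed.
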